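(* In a monotonous quiver, a phylogenetic vertex $X$ has exactly $h(X)$ isotypy classes of critical ancestors.
   Context: A quiver consists of a class of vertices and, for each ordered pair of vertices $(A,B)$, a set of edges $A\to B$ (loops and multiple edges allowed). An evolution of length $m\ge 0$ is a sequence $A_0\leftarrow A_1\leftarrow\cdots\leftarrow A_m$ of vertices together with edges $A_k\to A_{k-1}$ ($1\le k\le m$); $A_0$ is its initial and $A_m$ its terminal vertex. Write $A\le B$ ($A$ is an ancestor of $B$) if there is an evolution with initial vertex $A$ and terminal vertex $B$; $A,B$ are isotypic ($A\sim B$) if $A\le B$ and $B\le A$. A vertex $A$ is primitive if every ancestor of $A$ is isotypic to $A$. A full evolution for $X$ is an evolution with primitive initial vertex and terminal vertex $X$. The height $h(X)$ is the smallest length of a full evolution for $X$ ($\infty$ if none). A vertex $A_k$ ($0\le k<m$) of an evolution $A_0\leftarrow\cdots\leftarrow A_m$ is critical if $h(A_k)<\infty$ and $h(A_{k+1})=h(A_k)+1$. The critical ancestors of a vertex $B$ are the critical vertices of full evolutions terminating at $B$. An evolution $\alpha=(A_0\leftarrow\cdots\leftarrow A_m)$ embeds in $\beta=(B_0\leftarrow\cdots\leftarrow B_n)$ if $m\le n$ and there are $0\le r_0<\cdots<r_m\le n$ with $A_k\sim B_{r_k}$. A universal evolution for $X$ is a full evolution for $X$ embedding in every full evolution for $X$; $X$ is phylogenetic if one exists. A quiver is monotonous if $h(A)\ge h(B)$ for every edge $A\to B$. *)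

From Stdlib Require Import Arith List.
Import ListNotations.
Set Implicit Arguments.

Section Quiver.
Variable V : Type.
Variable E : V -> V -> Type.

(* The vertex list [A_0; A_1; ...; A_m] carries edges A_k -> A_(k-1). *)
Fixpoint chain (l : list V) : Prop :=
  match l with
  | a :: ((b :: _) as t) => inhabited (E b a) /\ chain t
  | _ => True
  end.

(* An evolution is a nonempty chain; we represent it as a list A_0 :: rest,
   its length is [length rest], initial vertex A_0, terminal [last (A_0::rest) A_0]. *)
Definition evolution (l : list V) : Prop := l <> [] /\ chain l.

Definition initial (l : list V) (A : V) : Prop := hd_error l = Some A.
Definition terminal (l : list V) (B : V) : Prop :=
  exists A, hd_error l = Some A /\ last l A = B.
Definition evlength (l : list V) : nat := pred (length l).

Definition ancestor (A B : V) : Prop :=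
  exists l, evolution l /\ initial l A /\ terminal l B.

Definition isotypic (A B : V) : Prop := ancestor A B /\ ancestor B A.

Definition primitive (A : V) : Prop := forall B, ancestor B A -> isotypic B A.

Definition full_evolution (X : V) (l : list V) : Prop :=
  evolution l /\ (exists A, initial l A /\ primitive A) /\ terminal l X.

(* h(X) = n  (h(X) = infinity iff no n satisfies this) *)
Definition height_is (X : V) (n : nat) : Prop :=
  (exists l, full_evolution X l /\ evlength l = n) /\
  (forall l, full_evolution X l -> n <= evlength l).

Definition critical_in (l : list V) (A : V) : Prop :=
  exists k B n, nth_error l k = Some A /\ nth_error l (S k) = Some B /\
                height_is A n /\ height_is B (S n).

Definition critical_ancestor (B A : V) : Prop :=
  exists l, full_evolution B l /\ critical_in l A.

Definition embeds (alpha beta : list V) : Prop :=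
  evlength alpha <= evlength beta /\
  exists r : nat -> nat,
    (forall k, S k < length alpha -> r k < r (S k)) /\
    (forall k A, nth_error alpha k = Some A ->
       exists B, nth_error beta (r k) = Some B /\ isotypic A B).

Definition universal_evolution (X : V) (l : list V) : Prop :=
  full_evolution X l /\ forall l', full_evolution X l' -> embeds l l'.

Definition phylogenetic (X : V) : Prop := exists l, universal_evolution X l.

(* h(A) >= h(B) for every edge A -> B (with the convention infinity >= everything) *)
Definition monotonous : Prop :=
  forall A B, inhabited (E A B) ->
    forall n, height_is A n -> exists m, height_is B m /\ m <= n.

End Quiver.

(* A universal evolution U of X has length h(X), since it embeds in a shortest full evolution.
   In a monotonous quiver an ancestor is never higher than its descendant, so the k-th vertex
   of a shortest full evolution has height exactly k; hence the first h(X) vertices of U are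
   critical and pairwise non-isotypic.  Conversely, let c be critical of height j in a full
   evolution of X.  Replacing everything before c by a shortest full evolution of c gives a
   full evolution into which U embeds, and the image of U_j has height j.  It cannot lie after
   c, where every vertex descends from the successor of c, of height j + 1; so it is c. *)

From Stdlib Require Import Arith List Lia.
Import ListNotations.
Local Set Implicit Arguments.
Local Unset Strict Implicit.

Section Quiver.
Variable V : Type.
Variable E : V -> V -> Type.

Lemma chain_nthP l : chain E l <->
  forall k a b, nth_error l k = Some a -> nth_error l (S k) = Some b -> inhabited (E b a).
Proof.
  induction l as [|x [|y t] IH]; simpl.
  - split; [intros _ k a b Ha; destruct k; discriminate|tauto].
  - split; [intros _ k a b _ Hb; destruct k; discriminate|tauto].
  - rewrite IH. split.
    + intros [Hyx Ht] [|k] a b Ha Hb; [|exact (Ht k a b Ha Hb)].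
      injection Ha as <-. injection Hb as <-. exact Hyx.
    + intros H. split; [exact (H 0 x y eq_refl eq_refl)|].
      intros k. exact (H (S k)).
Qed.

Lemma terminal_nthP (l : list V) B : terminal l B <-> nth_error l (evlength l) = Some B.
Proof.
  unfold terminal, evlength.
  assert (Hlast : forall (x d : V) t, nth_error (x :: t) (length t) = Some (last (x :: t) d)).
  { intros x d t. revert x. induction t as [|y t IH]; intros x; [reflexivity|].
    exact (IH y). }
  destruct l as [|x t]; simpl; [split; [intros [A [H _]]|]; discriminate|].
  rewrite (Hlast x x t). split.
  - intros [A [[= <-] <-]]. reflexivity.
  - intros [= HB]. exists x. auto.
Qed.

Lemma length_evlength (l : list V) : l <> [] -> length l = S (evlength l).
Proof. destruct l; [congruence|reflexivity]. Qed.

Lemma nth_error_le_evlength (l : list V) i a : nth_error l i = Some a -> i <= evlength l.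
Proof.
  intros Ha. assert (i < length l) by (apply nth_error_Some; congruence).
  unfold evlength. lia.
Qed.

Lemma chain_segment l i p a b : chain E l -> i <= p ->
  nth_error l i = Some a -> nth_error l p = Some b ->
  exists s, evolution E s /\ initial s a /\ terminal s b /\ evlength s = p - i.
Proof.
  intros Hl Hip Ha Hb.
  set (s := firstn (S (p - i)) (skipn i l)).
  assert (Hs : forall q, q <= p - i -> nth_error s q = nth_error l (i + q)).
  { intros q Hq. unfold s. rewrite nth_error_firstn, nth_error_skipn.
    destruct (Nat.ltb_spec q (S (p - i))); [reflexivity|lia]. }
  assert (Hlen : evlength s = p - i).
  { assert (p < length l) by (apply nth_error_Some; congruence).
    unfold evlength, s. rewrite length_firstn, length_skipn. lia. }
  exists s. split; [split|split; [|split; [|exact Hlen]]].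
  - intros Hnil. specialize (Hs 0 (Nat.le_0_l _)).
    rewrite Hnil, Nat.add_0_r, Ha in Hs. discriminate.
  - apply chain_nthP. intros q x y Hx Hy.
    assert (S q < length s) by (apply nth_error_Some; congruence).
    unfold evlength in Hlen.
    rewrite Hs in Hx, Hy by lia. rewrite Nat.add_succ_r in Hy.
    exact (proj1 (chain_nthP l) Hl _ _ _ Hx Hy).
  - change (nth_error s 0 = Some a). rewrite Hs, Nat.add_0_r by lia. exact Ha.
  - apply terminal_nthP. rewrite Hlen, Hs by lia.
    replace (i + (p - i)) with p by lia. exact Hb.
Qed.

Lemma full_evolution_prefix X l k c : full_evolution E X l -> nth_error l k = Some c ->
  exists s, full_evolution E c s /\ evlength s = k.
Proof.
  intros [[_ Hl] [[A [HA HAp]] _]] Hc.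
  destruct (chain_segment Hl (Nat.le_0_l k) HA Hc) as (s & Hs & Hsa & Hsc & Hlen).
  exists s. split; [|lia]. split; [exact Hs|]. split; [exists A; auto|exact Hsc].
Qed.

Lemma nth_error_splice l k c (M : list V) q : nth_error l k = Some c -> terminal M c ->
  nth_error (M ++ skipn (S k) l) (evlength M + q) = nth_error l (k + q).
Proof.
  intros Hc HM. apply terminal_nthP in HM.
  assert (HlenM : length M = S (evlength M)) by (destruct M; [discriminate|reflexivity]).
  destruct q as [|q].
  - rewrite nth_error_app1 by lia. rewrite !Nat.add_0_r. congruence.
  - rewrite nth_error_app2, nth_error_skipn by lia. f_equal. lia.
Qed.

Lemma full_evolution_splice X l k c M : full_evolution E X l -> nth_error l k = Some c ->
  full_evolution E c M ->
  full_evolution E X (M ++ skipn (S k) l) /\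
  evlength (M ++ skipn (S k) l) = evlength M + (evlength l - k).
Proof.
  intros [[_ Hl] [_ HX]] Hc [[HMne HM] [[A [HA HAp]] HMc]].
  apply terminal_nthP in HX.
  pose proof (length_evlength HMne) as HlenM.
  assert (Hk : k < length l) by (apply nth_error_Some; congruence).
  assert (HlenL : evlength (M ++ skipn (S k) l) = evlength M + (evlength l - k)).
  { unfold evlength at 1 3. rewrite length_app, length_skipn. lia. }
  pose proof (fun q => nth_error_splice q Hc HMc) as HLl.
  split; [split; [split|split]|exact HlenL].
  - destruct M; [congruence|discriminate].
  - apply chain_nthP. intros p a b Ha Hb.
    destruct (Nat.lt_ge_cases p (evlength M)) as [Hp|Hp].
    + rewrite nth_error_app1 in Ha, Hb by lia.
      exact (proj1 (chain_nthP M) HM p a b Ha Hb).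
    + replace p with (evlength M + (p - evlength M)) in Ha, Hb by lia.
      rewrite HLl in Ha. rewrite <- Nat.add_succ_r, HLl, Nat.add_succ_r in Hb.
      exact (proj1 (chain_nthP l) Hl _ a b Ha Hb).
  - exists A. split; [|exact HAp]. destruct M; [congruence|exact HA].
  - apply terminal_nthP. rewrite HlenL, HLl.
    replace (k + (evlength l - k)) with (evlength l) by (unfold evlength; lia). exact HX.
Qed.


Lemma height_unique X n m : height_is E X n -> height_is E X m -> n = m.
Proof. intros [[l1 [F1 <-]] H1] [[l2 [F2 <-]] H2]. apply Nat.le_antisymm; auto. Qed.

Section Monotonous.
Hypothesis Hmono : monotonous E.

Lemma chain_height_le l i p a b m : chain E l -> i <= p ->
  nth_error l i = Some a -> nth_error l p = Some b -> height_is E b m ->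
  exists k, height_is E a k /\ k <= m.
Proof.
  intros Hl Hip Ha Hb Hbm.
  remember (p - i) as d eqn:Hd. revert i a Hip Ha Hd.
  induction d as [|d IH]; intros i a Hip Ha Hd.
  - replace i with p in Ha by lia. exists m. split; [congruence|lia].
  - destruct (nth_error l (S i)) as [a'|] eqn:Ha'.
    2: { apply nth_error_None in Ha'. assert (p < length l) by (apply nth_error_Some; congruence). lia. }
    destruct (IH (S i) a' ltac:(lia) Ha' ltac:(lia)) as [k' [Ha'k' Hk'm]].
    destruct (Hmono (proj1 (chain_nthP l) Hl i a a' Ha Ha') Ha'k') as [k [Hak Hkk']].
    exists k. split; [exact Hak|lia].
Qed.

Lemma ancestor_height_le A B m : ancestor E A B -> height_is E B m ->
  exists k, height_is E A k /\ k <= m.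
Proof.
  intros (l & [_ Hl] & HA & HB) Hm. apply terminal_nthP in HB.
  exact (chain_height_le Hl (Nat.le_0_l _) HA HB Hm).
Qed.

Lemma isotypic_height A B m : isotypic E A B -> height_is E B m -> height_is E A m.
Proof.
  intros [HAB HBA] HBm.
  destruct (ancestor_height_le HAB HBm) as [k [HAk Hkm]].
  destruct (ancestor_height_le HBA HAk) as [m' [HBm' Hm'k]].
  pose proof (height_unique HBm HBm').
  replace m with k by lia. exact HAk.
Qed.

Lemma minimal_full_evolution_graded X l i a : full_evolution E X l ->
  height_is E X (evlength l) -> nth_error l i = Some a -> height_is E a i.
Proof.
  intros HXl HX Ha.
  pose proof HXl as [[_ Hl] [_ HXt]]. apply terminal_nthP in HXt.
  destruct (chain_height_le Hl (nth_error_le_evlength Ha) Ha HXt HX) as [k [Hak _]].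
  assert (Hki : k <= i).
  { destruct (full_evolution_prefix HXl Ha) as (s & Hs & <-). exact (proj2 Hak s Hs). }
  pose proof Hak as [[M [HM HMk]] _].
  destruct (full_evolution_splice HXl Ha HM) as [HL HLlen].
  pose proof (proj2 HX _ HL). pose proof (nth_error_le_evlength Ha).
  replace i with k by lia. exact Hak.
Qed.

Lemma minimal_full_evolution_critical X l i c : full_evolution E X l ->
  height_is E X (evlength l) -> i < evlength l -> nth_error l i = Some c ->
  critical_ancestor E X c.
Proof.
  intros HXl HX Hi Hc.
  destruct (nth_error l (S i)) as [B|] eqn:HB.
  2: { apply nth_error_None in HB. unfold evlength in Hi. lia. }
  exists l. split; [exact HXl|]. exists i, B, i.
  split; [exact Hc|split; [exact HB|split]];
    eapply minimal_full_evolution_graded; eassumption.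
Qed.

Lemma universal_evolution_evlength X U n : universal_evolution E X U ->
  height_is E X n -> evlength U = n.
Proof.
  intros [HU Huniv] [[l [Hl <-]] Hmin].
  apply Nat.le_antisymm; [exact (proj1 (Huniv l Hl))|exact (Hmin U HU)].
Qed.

Lemma splice_vertex_of_height X l k c B j M p w :
  full_evolution E X l -> nth_error l k = Some c -> nth_error l (S k) = Some B ->
  height_is E B (S j) -> full_evolution E c M -> evlength M = j -> height_is E c j ->
  nth_error (M ++ skipn (S k) l) p = Some w -> height_is E w j -> w = c.
Proof.
  intros HXl Hc HB HBj HM HMj Hcj Hw Hwj.
  pose proof HM as [[HMne _] [_ HMc]].
  destruct (Nat.le_gt_cases p j) as [Hp|Hp].
  - rewrite nth_error_app1 in Hw by (rewrite length_evlength by exact HMne; lia).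
    assert (HcM : height_is E c (evlength M)) by (rewrite HMj; exact Hcj).
    pose proof (height_unique (minimal_full_evolution_graded HM HcM Hw) Hwj) as ->.
    apply terminal_nthP in HMc. rewrite HMj in HMc. congruence.
  - replace p with (evlength M + (p - j)) in Hw by lia.
    rewrite (nth_error_splice _ Hc HMc) in Hw.
    pose proof HXl as [[_ Hl] _].
    assert (Hle : S k <= k + (p - j)) by lia.
    destruct (chain_height_le Hl Hle HB Hw Hwj) as [m [HBm Hmj]].
    pose proof (height_unique HBj HBm). lia.
Qed.

Lemma critical_ancestor_isotypic_universal X U n c : universal_evolution E X U ->
  height_is E X n -> critical_ancestor E X c ->
  exists j u, j < n /\ nth_error U j = Some u /\ isotypic E c u.
Proof.
  intros HU HX (l & HXl & k & B & j & Hc & HB & Hcj & HBj).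
  assert (Hjn : j < n).
  { pose proof HXl as [[_ Hl] [_ HXt]]. apply terminal_nthP in HXt.
    destruct (chain_height_le Hl (nth_error_le_evlength HB) HB HXt HX) as [m [HBm Hmn]].
    pose proof (height_unique HBj HBm). lia. }
  pose proof Hcj as [[M [HM HMj]] _].
  destruct (full_evolution_splice HXl Hc HM) as [HL _].
  pose proof (universal_evolution_evlength HU HX) as HUn.
  destruct HU as [HUfull Huniv].
  destruct (Huniv _ HL) as [_ [r [_ Hemb]]].
  destruct (nth_error U j) as [u|] eqn:Hu.
  2: { apply nth_error_None in Hu. rewrite length_evlength in Hu by apply HUfull. lia. }
  destruct (Hemb j u Hu) as [w [Hw Huw]].
  assert (Hwj : height_is E w j).
  { apply (isotypic_height (B := u)); [split; apply Huw|].
    apply (minimal_full_evolution_graded HUfull); [rewrite HUn|]; assumption. }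
  rewrite (splice_vertex_of_height HXl Hc HB HBj HM HMj Hcj Hw Hwj) in Huw.
  exists j, u. split; [exact Hjn|split; [exact Hu|split; apply Huw]].
Qed.

End Monotonous.

End Quiver.

Theorem corollary6p3 (V : Type) (E : V -> V -> Type) :
  monotonous E ->
  forall X : V, phylogenetic E X ->
  forall n : nat, height_is E X n ->
  exists cs : list V,
    length cs = n /\
    (forall c, In c cs -> critical_ancestor E X c) /\
    (forall i j a b, i <> j -> nth_error cs i = Some a -> nth_error cs j = Some b ->
        ~ isotypic E a b) /\
    (forall c, critical_ancestor E X c -> exists c', In c' cs /\ isotypic E c c').
Proof.
  intros Hmono X [U HU] n HX.
  pose proof (universal_evolution_evlength HU HX) as HUn.
  pose proof HU as [HUfull _].
  assert (HXU : height_is E X (evlength U)) by (rewrite HUn; exact HX).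
  assert (Hprefix : forall i a,
            nth_error (firstn n U) i = Some a <-> i < n /\ nth_error U i = Some a).
  { intros i a. rewrite nth_error_firstn.
    destruct (Nat.ltb_spec i n); intuition (discriminate || lia). }
  exists (firstn n U). split; [|split; [|split]].
  - rewrite length_firstn, length_evlength by apply HUfull. lia.
  - intros c Hin. destruct (In_nth_error _ _ Hin) as [i Hi].
    apply Hprefix in Hi as [Hin' Hi].
    apply (minimal_full_evolution_critical Hmono HUfull HXU (i := i)); [lia|exact Hi].
  - intros i j a b Hij Ha Hb Hab.
    apply Hprefix in Ha as [_ Ha]. apply Hprefix in Hb as [_ Hb].
    apply Hij, (height_unique (minimal_full_evolution_graded Hmono HUfull HXU Ha)).
    exact (isotypic_height Hmono Hab (minimal_full_evolution_graded Hmono HUfull HXU Hb)).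
  - intros c Hc.
    destruct (critical_ancestor_isotypic_universal Hmono HU HX Hc) as (j & u & Hj & Hu & Hcu).
    exists u. split; [apply nth_error_In with j; apply Hprefix; auto|exact Hcu].
Qed.
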